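(* (a) Suppose that $G$ is a noncyclotomic bipartite graph having a vertex $v$ such that the induced subgraph on $V(G)\setminus\{v\}$ is cyclotomic. Then $G$ is a Salem graph. (b) Suppose that $G$ is a noncyclotomic bipartite graph with the property that for each minimal induced subgraph $M$ of $G$, the complementary induced subgraph $G|_{V(G)\setminus V(M)}$ is cyclotomic. Then $G$ is a Salem graph.
   Context: Graphs are finite simple graphs; eigenvalues are those of the adjacency matrix; the index of a graph is its largest eigenvalue. A graph is cyclotomic if all its eigenvalues lie in $[-2,2]$. A minimal induced subgraph of $G$ means an induced subgraph of $G$ with index greater than $2$ such that every induced subgraph of it obtained by deleting one vertex has index at most $2$. A bipartite graph $G$ is a Salem graph if it has exactly one eigenvalue $\lambda>2$ and only the eigenvalue $-\lambda$ in $(-\infty,-2)$. *)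

From HB Require Import structures.
From mathcomp Require Import all_boot all_order all_algebra.
From mathcomp Require Import reals.
Unset Printing Implicit Defensive.
Import Order.TTheory GRing.Theory Num.Theory.
Local Open Scope ring_scope.

Definition simple_graph (T : finType) (e : rel T) : Prop :=
  (forall x y, e x y = e y x) /\ (forall x, ~~ e x x).
Arguments simple_graph {T}.

Definition adj (R : realType) (T : finType) (e : rel T) (S : {set T})
  : 'M[R]_#|S| :=
  \matrix_(i, j) (e (enum_val i) (enum_val j))%:R.
Arguments adj R {T}.

Definition cpoly (R : realType) (T : finType) (e : rel T) (S : {set T})
  : {poly R} := char_poly (adj R e S).
Arguments cpoly R {T}.

Definition eigenvalue_of (R : realType) (T : finType) (e : rel T)
  (S : {set T}) (mu : R) : Prop := root (cpoly R e S) mu.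
Arguments eigenvalue_of R {T}.

Definition cyclotomic (R : realType) (T : finType) (e : rel T)
  (S : {set T}) : Prop :=
  forall mu, eigenvalue_of R e S mu -> -2 <= mu <= 2.
Arguments cyclotomic R {T}.

(* "index (largest eigenvalue) > 2", i.e. some eigenvalue exceeds 2 *)
Definition index_gt2 (R : realType) (T : finType) (e : rel T)
  (S : {set T}) : Prop :=
  exists mu, eigenvalue_of R e S mu /\ 2 < mu.
Arguments index_gt2 R {T}.

Definition minimal_induced (R : realType) (T : finType) (e : rel T)
  (M : {set T}) : Prop :=
  index_gt2 R e M /\ forall v, v \in M -> ~ index_gt2 R e (M :\ v).
Arguments minimal_induced R {T}.

Definition bipartite (T : finType) (e : rel T) : Prop :=
  exists X : {set T}, forall x y, e x y -> (x \in X) != (y \in X).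
Arguments bipartite {T}.

Definition salem_graph (R : realType) (T : finType) (e : rel T) : Prop :=
  bipartite e /\
  exists lambda : R, 2 < lambda /\
    mup lambda (cpoly R e setT) = 1%N /\
    (forall mu, eigenvalue_of R e setT mu -> 2 < mu -> mu = lambda) /\
    mup (- lambda) (cpoly R e setT) = 1%N /\
    (forall mu, eigenvalue_of R e setT mu -> mu < -2 -> mu = - lambda).

Arguments salem_graph R {T}.

From mathcomp Require Import all_boot all_order all_algebra.
From mathcomp Require Import reals complex ring.
From Stdlib Require Import Classical.
Import Order.TTheory GRing.Theory Num.Theory.
Set Implicit Arguments.
Unset Strict Implicit.
Local Open Scope ring_scope.

(* The adjacency matrix of G is real symmetric, hence unitarily diagonalisable,
   and bipartiteness makes its spectrum symmetric about 0.  So G is a Salem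
   graph as soon as at most one diagonal entry of the diagonalisation exceeds
   2; non-cyclotomicity then supplies exactly one.  If two entries exceeded 2,
   the Rayleigh quotient would exceed 2 on every nonzero vector of the plane
   spanned by the two eigenvectors, whereas it is at most 2 on vectors supported
   by a cyclotomic induced subgraph.
   (a) Some nonzero vector of that plane vanishes at v.
   (b) A real eigenvector for an eigenvalue above 2 has constant sign: otherwise
   its positive and negative parts have disjoint supports and both have Rayleigh
   quotient above 2, but the support of the first contains a minimal induced
   subgraph M, and the second is supported by the cyclotomic complement of M.
   Two orthogonal real eigenvectors of that kind have disjoint supports, which
   is impossible for the same reason. *)

(** * Spectra of real symmetric matrices *)

Lemma char_poly_conj (K : fieldType) n (V Q B : 'M[K]_n) : V *m Q = 1%:M ->
  char_poly (V *m B *m Q) = char_poly B.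
Proof.
move=> VQ; set pV := map_mx polyC V; set pQ := map_mx polyC Q.
have pVQ : pV *m pQ = 1%:M by rewrite -map_mxM VQ map_mx1.
have detVQ : \det pV * \det pQ = 1 by rewrite -det_mulmx pVQ det1.
have XE : ('X%:M : 'M[{poly K}]_n) = pV *m 'X%:M *m pQ.
  by rewrite -mulmxA -scalar_mxC mulmxA pVQ mul1mx.
rewrite /char_poly /char_poly_mx !map_mxM -/pV -/pQ [in LHS]XE.
by rewrite -mulmxBl -mulmxBr !det_mulmx mulrC mulrA [\det pQ * _]mulrC detVQ mul1r.
Qed.

Lemma mup_map (F K : fieldType) (f : {rmorphism F -> K}) x q : q != 0 ->
  mup (f x) (map_poly f q) = mup x q.
Proof.
move=> q0; have fq0 : map_poly f q != 0 by rewrite map_poly_eq0.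
apply/eqP; rewrite eqn_leq; apply/andP; split.
  by rewrite mup_leq // -map_polyXsubC -rmorphXn dvdp_map -mup_leq.
by rewrite mup_geq // -map_polyXsubC -rmorphXn dvdp_map -mup_geq.
Qed.

Lemma root_mup (F : fieldType) (q : {poly F}) x : q != 0 -> root q x = (0 < mup x q)%N.
Proof. by move=> q0; rewrite -XsubC_dvd // dvdp_XsubCl. Qed.

Section RealSymmetric.
Variable R : realType.
Local Notation C := R[i].
Local Notation toC := (real_complex R).
Local Open Scope sesquilinear_scope.

Lemma conj_toC (r : R) : (toC r)^* = toC r.
Proof. by apply/conj_Creal/complex_realP; exists r. Qed.

Lemma complex_gt_real (r : R) (z : C) : toC r < z -> exists2 a, z = toC a & r < a.
Proof.
move=> rz; have rR : toC r \is Num.real by apply/complex_realP; exists r.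
have /complex_realP [a za] : z \is Num.real.
  by rewrite -[z](subrK (toC r)) realD // gtr0_real ?subr_gt0.
by exists a; rewrite // -ltcR -za.
Qed.

Lemma realsym_spectral n (A : 'M[R]_n) : A^T = A ->
  exists (P : 'M[C]_n) (d : 'rV[C]_n),
    [/\ P \is unitarymx, d \is a realmx & map_mx toC A = invmx P *m diag_mx d *m P].
Proof.
move=> AT; have Aherm : map_mx toC A \is hermsymmx.
  apply: realsym_hermsym.
    apply/is_hermitianmxP; rewrite expr0 scale1r.
    by apply/matrixP => i j; rewrite !mxE -{1}AT mxE.
  by apply/mxOverP => i j; rewrite mxE; apply/complex_realP; exists (A i j).
exists (spectralmx (map_mx toC A)), (spectral_diag (map_mx toC A)); split.
- exact: spectral_unitarymx.
- exact: hermitian_spectral_diag_real.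
- exact/orthomx_spectralP/hermitian_normalmx.
Qed.

Lemma mup_char_poly_diag n (A : 'M[R]_n) (V Q : 'M[C]_n) (d : 'rV[C]_n) :
  V *m Q = 1%:M -> map_mx toC A = V *m diag_mx d *m Q ->
  forall mu, mup mu (char_poly A) = #|[pred i | d 0 i == toC mu]|.
Proof.
move=> VQ AE mu; rewrite -(mup_map toC) ?monic_neq0 ?char_poly_monic //.
rewrite map_char_poly AE char_poly_conj // char_poly_trig ?diag_mx_is_trig //.
under eq_bigr do rewrite mxE eqxx mulr1n.
rewrite -(big_map (fun i => d 0 i) xpredT (fun z => 'X - z%:P)) mu_prod_XsubC.
by rewrite count_map cardE /enum_mem size_filter [index_enum _]unlock.
Qed.

Lemma diag_form n (u d : 'rV[C]_n) :
  (u *m diag_mx d *m u^t*) 0 0 = \sum_j d 0 j * (u 0 j * (u 0 j)^*).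
Proof. by rewrite mxE; apply: eq_bigr => j _; rewrite mul_mx_diag !mxE mulrAC mulrC. Qed.

Lemma row_norm n (u : 'rV[C]_n) : (u *m u^t*) 0 0 = \sum_j u 0 j * (u 0 j)^*.
Proof. by rewrite mxE; apply: eq_bigr => j _; rewrite !mxE. Qed.

Lemma unitary_coords_form n (A : 'M[C]_n) (P : 'M[C]_n) (d c : 'rV[C]_n) :
  P \is unitarymx -> A = invmx P *m diag_mx d *m P ->
  (c *m P *m A *m (c *m P)^t*) 0 0 = (c *m diag_mx d *m c^t*) 0 0 /\
  (c *m P *m (c *m P)^t*) 0 0 = (c *m c^t*) 0 0.
Proof.
by move=> Pu ->; rewrite invmx_unitary // trmx_mul map_mxM !mulmxA !mulmxtVK.
Qed.

Lemma diag_form_gt n (r : R) (d c : 'rV[C]_n) : c != 0 ->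
  (forall k, c 0 k != 0 -> toC r < d 0 k) ->
  toC r * (c *m c^t*) 0 0 < (c *m diag_mx d *m c^t*) 0 0.
Proof.
move=> c0 dc; rewrite -subr_gt0 diag_form row_norm mulr_sumr -sumrB.
have [k ck] : exists k, c 0 k != 0.
  apply/existsP; apply: contraR c0 => /existsPn c0.
  by apply/eqP/rowP => k; rewrite mxE; exact/eqP/negPn.
rewrite (bigD1 k) //= -mulrBl; apply: ltr_pwDl.
  by rewrite mulr_gt0 ?subr_gt0 ?mul_conjC_gt0 ?dc.
apply: sumr_ge0 => j _; rewrite -mulrBl.
have [->|cj] := eqVneq (c 0 j) 0; first by rewrite mul0r mulr0.
by rewrite mulr_ge0 ?mul_conjC_ge0 // subr_ge0 ltW ?dc.
Qed.

Lemma rayleigh_mx n (A : 'M[R]_n) (c : R) : A^T = A ->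
  (forall mu, root (char_poly A) mu -> mu <= c) ->
  forall u : 'rV[C]_n,
    (u *m map_mx toC A *m u^t*) 0 0 <= toC c * (u *m u^t*) 0 0.
Proof.
move=> AT Ac u; have [P [d [Pu dreal AE]]] := realsym_spectral AT.
have PtP : P^t* *m P = 1%:M by rewrite -invmx_unitary // mulVmx ?unitarymx_unit.
rewrite -[u]mulmx1 -PtP !mulmxA.
have [-> ->] := unitary_coords_form (u *m P^t*) Pu AE.
rewrite diag_form row_norm mulr_sumr; apply: ler_sum => j _.
rewrite ler_wpM2r ?mul_conjC_ge0 //.
have /mxOverP /(_ 0 j) /complex_realP [r dj] := dreal.
rewrite dj lecR; apply: Ac.
rewrite root_mup ?monic_neq0 ?char_poly_monic //.
rewrite (mup_char_poly_diag (mulVmx (unitarymx_unit Pu)) AE); apply/card_gt0P.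
by exists j; rewrite inE dj.
Qed.

Lemma mup_char_polyN n (A : 'M[R]_n) mu : A^T = A ->
  mup (- mu) (char_poly A) = mup mu (char_poly (- A)).
Proof.
move=> AT; have [P [d [Pu _ AE]]] := realsym_spectral AT.
have VQ := mulVmx (unitarymx_unit Pu).
have NAE : map_mx toC (- A) = invmx P *m diag_mx (- d) *m P.
  rewrite map_mxN AE -mulNmx -mulmxN; congr (_ *m _ *m _).
  by apply/matrixP => i j; rewrite !mxE mulNrn.
rewrite (mup_char_poly_diag VQ AE) (mup_char_poly_diag VQ NAE).
by apply: eq_card => i; rewrite !inE mxE rmorphN eqr_oppLR.
Qed.

End RealSymmetric.

(** * Rayleigh quotients of induced subgraphs *)

Section Graph.
Variables (R : realType) (T : finType) (e : rel T).
Hypothesis e_sym : forall x y, e x y = e y x.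
Local Notation C := R[i].
Local Notation toC := (real_complex R).
Local Open Scope sesquilinear_scope.

Lemma adj_sym S : (adj R e S)^T = adj R e S.
Proof. by apply/matrixP => i j; rewrite !mxE e_sym. Qed.

Lemma eigenvalue_ofE S mu : eigenvalue_of R e S mu = (0 < mup mu (cpoly R e S))%N.
Proof. by rewrite /eigenvalue_of root_mup // monic_neq0 ?char_poly_monic. Qed.

Lemma bipartite_mupN S mu : bipartite e ->
  mup (- mu) (cpoly R e S) = mup mu (cpoly R e S).
Proof.
case=> X eX; rewrite /cpoly mup_char_polyN ?adj_sym //.
pose D : 'M[R]_#|S| := diag_mx (\row_i (if enum_val i \in X then 1 else -1)).
have DD : D *m D = 1%:M.
  rewrite mulmx_diag -diag_const_mx; congr diag_mx; apply/rowP => i.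
  by rewrite !mxE; case: ifP; rewrite ?mulrNN mulr1.
have DAD : D *m adj R e S *m D = - adj R e S.
  apply/matrixP => i j; rewrite mul_mx_diag mul_diag_mx !mxE.
  have := eX (enum_val i) (enum_val j).
  case: (e _ _) => [/(_ isT)|_]; last by rewrite mulr0 mul0r oppr0.
  by case: (_ \in X); case: (_ \in X); rewrite //= ?mulN1r ?mulr1 ?mul1r.
by rewrite -DAD char_poly_conj.
Qed.

Lemma bipartite_eigenvalueN S mu : bipartite e ->
  eigenvalue_of R e S (- mu) = eigenvalue_of R e S mu.
Proof. by move=> eb; rewrite !eigenvalue_ofE bipartite_mupN. Qed.

Lemma bipartite_index_gt2 S : bipartite e -> ~ cyclotomic R e S ->
  exists2 lam, eigenvalue_of R e S lam & 2 < lam.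
Proof.
move=> eb Snc; apply: NNPP => Sle2; apply: Snc => mu Smu.
apply/andP; split; rewrite leNgt; apply/negP => mu2; apply: Sle2.
  by exists (- mu); rewrite ?bipartite_eigenvalueN // ltrNr.
by exists mu.
Qed.

Lemma ex_minimal_induced (S : {set T}) : index_gt2 R e S ->
  exists2 M : {set T}, M \subset S & minimal_induced R e M.
Proof.
have [k] := ubnP #|S|; elim: k S => // k IH S Sk S2.
have [Smin|Snmin] := classic (minimal_induced R e S); first by exists S.
have [v [vS Sv2]] : exists v, v \in S /\ index_gt2 R e (S :\ v).
  apply: NNPP => nv; apply: Snmin; split => // v vS Sv2; apply: nv; by exists v.
have [|M MS Mmin] := IH (S :\ v) _ Sv2; first by move: Sk; rewrite (cardsD1 v S) vS.
by exists M => //; apply: subset_trans MS (subD1set S v).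
Qed.

Definition supported (S : {set T}) (V : zmodType) (f : T -> V) :=
  forall x, x \notin S -> f x = 0.

Definition cform (f : T -> C) := \sum_x \sum_y f x * (e x y)%:R * (f y)^*.
Definition cdot (f g : T -> C) := \sum_x f x * (g x)^*.
Definition rform (f : T -> R) := \sum_x \sum_y f x * (e x y)%:R * f y.
Definition rnorm (f : T -> R) := \sum_x f x * f x.

Lemma sum_supported (S : {set T}) (F : T -> C) : supported S F ->
  \sum_x F x = \sum_(i < #|S|) F (enum_val i).
Proof.
move=> FS; rewrite -big_enum_val [RHS]big_mkcond; apply: eq_bigr => x _.
by case: ifP => // /negbT /FS.
Qed.

Definition row_on (S : {set T}) (f : T -> C) : 'rV[C]_#|S| := \row_i f (enum_val i).

Lemma cform_mx S f : supported S f ->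
  cform f = (row_on S f *m map_mx toC (adj R e S) *m (row_on S f)^t*) 0 0.
Proof.
move=> fS; rewrite /cform exchange_big /= (@sum_supported S); last first.
  by move=> y /fS ->; rewrite big1 // => x _; rewrite conjC0 mulr0.
rewrite !mxE; apply: eq_bigr => j _.
rewrite (@sum_supported S); last by move=> x /fS ->; rewrite -mulrA mul0r.
rewrite !mxE big_distrl /=; apply: eq_bigr => k _.
by rewrite !mxE rmorph_nat.
Qed.

Lemma cdot_mx S f : supported S f ->
  cdot f f = (row_on S f *m (row_on S f)^t*) 0 0.
Proof.
move=> fS; rewrite /cdot (@sum_supported S); last by move=> x /fS ->; rewrite mul0r.
by rewrite !mxE; apply: eq_bigr => j _; rewrite !mxE.
Qed.

Lemma cform_le S (c : R) f : (forall mu, eigenvalue_of R e S mu -> mu <= c) ->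
  supported S f -> cform f <= toC c * cdot f f.
Proof.
by move=> Sc fS; rewrite (cform_mx fS) (cdot_mx fS); apply: (rayleigh_mx (adj_sym S)).
Qed.

Lemma rform_le S (c : R) f : (forall mu, eigenvalue_of R e S mu -> mu <= c) ->
  supported S f -> rform f <= c * rnorm f.
Proof.
move=> Sc fS; rewrite -lecR rmorphM /=.
have -> : toC (rform f) = cform (toC \o f).
  rewrite /cform /rform rmorph_sum; apply: eq_bigr => x _.
  by rewrite rmorph_sum; apply: eq_bigr => y _; rewrite !rmorphM rmorph_nat conj_toC.
have -> : toC (rnorm f) = cdot (toC \o f) (toC \o f).
  by rewrite /cdot /rnorm rmorph_sum; apply: eq_bigr => x _; rewrite rmorphM conj_toC.
by apply: (cform_le (S := S)) => // x /fS /= ->; rewrite rmorph0.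
Qed.

(** * Eigenvectors for eigenvalues above 2 *)

Definition eigvecR (f : T -> R) (c : R) := forall t, \sum_s (e t s)%:R * f s = c * f t.
Definition eigvecC (g : T -> C) (c : R) :=
  forall t, \sum_s (e t s)%:R * g s = toC c * g t.

Lemma eigvecRZ f c k : eigvecR f c -> eigvecR (fun t => k * f t) c.
Proof.
by move=> fc t; under eq_bigr do rewrite mulrCA; rewrite -mulr_sumr fc mulrCA.
Qed.

Lemma rnorm_gt0 f : (exists t, f t != 0) -> 0 < rnorm f.
Proof.
case=> t ft; rewrite /rnorm (bigD1 t) //=; apply: ltr_pwDl.
  by rewrite -expr2 exprn_even_gt0.
by apply: sumr_ge0 => s _; rewrite -expr2 sqr_ge0.
Qed.

Definition posp (f : T -> R) t := Num.max (f t) 0.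

Lemma posp_ge0 f t : 0 <= posp f t.
Proof. by rewrite le_max lexx orbT. Qed.

Lemma posp_ge f t : f t <= posp f t.
Proof. by rewrite le_max lexx. Qed.

Lemma posp_mul f t : posp f t * f t = posp f t * posp f t.
Proof. by rewrite /posp maxEle; case: leP; rewrite ?mul0r. Qed.

Lemma rform_posp_gt f (r c : R) : eigvecR f c -> r < c -> (exists t, 0 < f t) ->
  r * rnorm (posp f) < rform (posp f).
Proof.
move=> fc rc [t ft]; have pf0 : 0 < rnorm (posp f).
  by apply: rnorm_gt0; exists t; rewrite /posp gt_eqF // lt_max ft.
apply: (@lt_le_trans _ _ (c * rnorm (posp f))); first by rewrite ltr_pM2r.
rewrite /rnorm /rform mulr_sumr; apply: ler_sum => s _.
rewrite -posp_mul mulrCA -fc mulr_sumr; apply: ler_sum => u _.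
by rewrite mulrA ler_wpM2l ?mulr_ge0 ?posp_ge0 ?ler0n ?posp_ge.
Qed.

Section MinimalComplementsCyclotomic.
Hypothesis compl_cyclo : forall M, minimal_induced R e M -> cyclotomic R e (~: M).

Lemma rform_disjoint_le f g : (forall t, f t != 0 -> g t = 0) ->
  2 * rnorm f < rform f -> rform g <= 2 * rnorm g.
Proof.
move=> fg f2; pose S := [set t | f t != 0].
have [M MS Mmin] : exists2 M : {set T}, M \subset S & minimal_induced R e M.
  apply: ex_minimal_induced; apply: NNPP => S2; move: f2; apply/negP; rewrite -leNgt.
  apply: (rform_le (S := S)) => [mu Smu|t]; last by rewrite inE negbK => /eqP.
  by rewrite leNgt; apply/negP => mu2; apply: S2; exists mu.
apply: (rform_le (S := ~: M)) => [mu /compl_cyclo/andP[] //|t].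
by rewrite inE negbK => /(subsetP MS); rewrite inE => /fg.
Qed.

Lemma eigvec_ge0 f c : eigvecR f c -> 2 < c -> (exists t, 0 < f t) ->
  forall t, 0 <= f t.
Proof.
move=> fc c2 fpos t; rewrite leNgt; apply/negP => ft.
have fNc := eigvecRZ (-1) fc.
have disj s : posp f s != 0 -> posp (fun s => -1 * f s) s = 0.
  rewrite /posp mulN1r => fs0; apply/max_idPr; rewrite oppr_le0 leNgt.
  by apply: contra fs0 => fs; apply/eqP/max_idPr/ltW.
have := rform_disjoint_le disj (rform_posp_gt fc c2 fpos).
by rewrite leNgt (rform_posp_gt fNc c2) //; exists t; rewrite mulN1r oppr_gt0.
Qed.

Lemma eigvec_sign_normalize f c : eigvecR f c -> 2 < c -> (exists t, f t != 0) ->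
  exists k : R, [/\ forall t, 0 <= k * f t, exists t, 0 < k * f t
                  & eigvecR (fun t => k * f t) c].
Proof.
move=> fc c2 [t ft]; pose k : R := if f t < 0 then -1 else 1.
have kft : 0 < k * f t.
  rewrite /k; have [ft0|ft0] := ltP (f t) 0; first by rewrite mulN1r oppr_gt0.
  by rewrite mul1r lt_neqAle eq_sym ft.
have kfc := eigvecRZ k fc.
by exists k; split => //; [apply: eigvec_ge0 kfc c2 _; exists t | exists t].
Qed.

Lemma eigvec_not_orthogonal x y a b : eigvecR x a -> eigvecR y b ->
  2 < a -> 2 < b -> (exists t, x t != 0) -> (exists t, y t != 0) ->
  \sum_t x t * y t != 0.
Proof.
move=> xa yb a2 b2 x0 y0; apply/eqP => xy.
have [k [kx0 kxpos kxa]] := eigvec_sign_normalize xa a2 x0.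
have [l [ly0 lypos lyb]] := eigvec_sign_normalize yb b2 y0.
have kxly : \sum_t (k * x t) * (l * y t) = 0.
  by under eq_bigr do rewrite mulrACA; rewrite -mulr_sumr xy mulr0.
have kxly0 := psumr_eq0P (fun t _ => mulr_ge0 (kx0 t) (ly0 t)) kxly.
have disj t : posp (fun t => k * x t) t != 0 -> posp (fun t => l * y t) t = 0.
  rewrite /posp !max_l ?kx0 ?ly0 // => kxt.
  by move/eqP: (kxly0 t isT); rewrite mulf_eq0 (negbTE kxt) => /eqP.
have := rform_disjoint_le disj (rform_posp_gt kxa a2 kxpos).
by rewrite leNgt (rform_posp_gt lyb b2 lypos).
Qed.

End MinimalComplementsCyclotomic.

Lemma Re_toCM (r : R) (z : C) : complex.Re (toC r * z) = r * complex.Re z.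
Proof. by case: z => a b /=; rewrite mul0r subr0. Qed.

Lemma Im_toCM (r : R) (z : C) : complex.Im (toC r * z) = r * complex.Im z.
Proof. by case: z => a b /=; rewrite mul0r addr0. Qed.

Lemma eigvecC_Re g c : eigvecC g c -> eigvecR (fun t => complex.Re (g t)) c.
Proof.
move=> gc t; rewrite -Re_toCM -gc raddf_sum; apply: eq_bigr => s _.
by rewrite -(rmorph_nat toC) /= Re_toCM.
Qed.

Lemma eigvecC_Im g c : eigvecC g c -> eigvecR (fun t => complex.Im (g t)) c.
Proof.
move=> gc t; rewrite -Im_toCM -gc raddf_sum; apply: eq_bigr => s _.
by rewrite -(rmorph_nat toC) /= Im_toCM.
Qed.

Lemma cdot_neq0 f g : cdot f g != 0 -> exists t, f t != 0.
Proof.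
move=> fg; apply/existsP; apply: contraNT fg => /existsPn f0.
by rewrite /cdot big1 // => t _; rewrite (eqP (negPn (f0 t))) mul0r.
Qed.

(* The last condition keeps every vector orthogonal to [g] off the line of [x]. *)
Lemma real_eigvec_of_eigvecC g a : eigvecC g a -> (exists t, g t != 0) ->
  exists x, [/\ eigvecR x a, exists t, x t != 0 & \sum_t g t * toC (x t) != 0].
Proof.
move=> ga [t gt].
have [/existsP [s gs]|/existsPn Re0] := boolP [exists s, complex.Re (g s) != 0].
  exists (fun s => complex.Re (g s)); split; [exact: eigvecC_Re | by exists s |].
  apply/eqP => /(congr1 (@complex.Re R)); rewrite raddf_sum /=.
  under eq_bigr do rewrite mulrC Re_toCM.
  by move=> /eqP; rewrite gt_eqF // rnorm_gt0 //; exists s.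
have gtI : complex.Im (g t) != 0.
  move: gt (Re0 t); rewrite negbK; case: (g t) => u v /= uv /eqP u0.
  by apply: contraNneq uv => v0; rewrite u0 v0.
exists (fun s => complex.Im (g s)); split; [exact: eigvecC_Im | by exists t |].
apply/eqP => /(congr1 (@complex.Im R)); rewrite raddf_sum /=.
under eq_bigr do rewrite mulrC Im_toCM.
by move=> /eqP; rewrite gt_eqF // rnorm_gt0 //; exists t.
Qed.

Lemma eigvecR_orthogonal x y a b : eigvecR x a -> eigvecR y b -> a != b ->
  \sum_t x t * y t = 0.
Proof.
move=> xa yb ab; have E : a * \sum_t x t * y t = b * \sum_t x t * y t.
  rewrite !mulr_sumr; transitivity (\sum_t \sum_s (e t s)%:R * x s * y t).
    by apply: eq_bigr => t _; rewrite mulrA -xa mulr_suml.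
  rewrite exchange_big /=; apply: eq_bigr => s _.
  rewrite mulrCA -yb mulr_sumr; apply: eq_bigr => t _.
  by rewrite e_sym mulrCA mulrA.
by apply/eqP; move/eqP: E; rewrite -subr_eq0 -mulrBl mulf_eq0 subr_eq0 (negbTE ab).
Qed.

Definition orth_proj (x y : T -> R) t := rnorm x * y t - (\sum_s x s * y s) * x t.

Lemma orth_proj_orthogonal x y : \sum_t x t * orth_proj x y t = 0.
Proof.
under eq_bigr do rewrite mulrBr mulrCA [x _ * (_ * x _)]mulrCA.
by rewrite sumrB -!mulr_sumr mulrC subrr.
Qed.

Lemma orth_proj_eq0 x y t : rnorm x != 0 -> orth_proj x y t = 0 ->
  y t = (\sum_s x s * y s) / rnorm x * x t.
Proof.
by move=> x0 /eqP; rewrite subr_eq0 => /eqP yt; apply: (mulfI x0); rewrite yt; field.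
Qed.

Lemma eigvecR_orth_proj x y a b : eigvecR x a -> eigvecR y b ->
  eigvecR (orth_proj x y) b.
Proof.
move=> xa yb t; rewrite /orth_proj; have [ab|ab] := eqVneq a b.
  under eq_bigr do rewrite mulrBr; rewrite sumrB.
  by rewrite (eigvecRZ _ yb) (eigvecRZ _ xa) ab mulrBr.
rewrite (eigvecR_orthogonal xa yb ab).
by under eq_bigr do rewrite mul0r subr0; rewrite (eigvecRZ _ yb) mul0r subr0.
Qed.

Lemma orthogonal_real_eigvec x a h b : eigvecR x a -> (exists t, x t != 0) ->
  eigvecC h b -> (forall L : C, exists t, h t != L * toC (x t)) ->
  exists y, [/\ eigvecR y b, exists t, y t != 0 & \sum_t x t * y t = 0].
Proof.
move=> xa x0 hb hx; pose hRe t := complex.Re (h t); pose hIm t := complex.Im (h t).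
have [/existsP [t pt]|/existsPn Re0] := boolP [exists t, orth_proj x hRe t != 0].
  exists (orth_proj x hRe); split; last exact: orth_proj_orthogonal; last by exists t.
  exact: eigvecR_orth_proj xa (eigvecC_Re hb).
have [/existsP [t pt]|/existsPn Im0] := boolP [exists t, orth_proj x hIm t != 0].
  exists (orth_proj x hIm); split; last exact: orth_proj_orthogonal; last by exists t.
  exact: eigvecR_orth_proj xa (eigvecC_Im hb).
have xn0 : rnorm x != 0 by rewrite gt_eqF ?rnorm_gt0.
pose coef y := (\sum_s x s * y s) / rnorm x.
exfalso; have [t /eqP []] := hx (Complex (coef hRe) (coef hIm)).
move: (orth_proj_eq0 xn0 (eqP (negPn (Re0 t)))) (orth_proj_eq0 xn0 (eqP (negPn (Im0 t)))).
rewrite /hRe /hIm; case: (h t) => u v /= -> ->.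
by apply/eqP; rewrite eq_complex /= !mulr0 subr0 add0r !eqxx.
Qed.

(** * The two criteria *)

Local Notation N := #|[set: T]|.

Definition vtx_index (t : T) : 'I_N := enum_rank_in (in_setT t) t.

Lemma vtx_indexK l : vtx_index (enum_val l) = l.
Proof. exact: enum_valK_in. Qed.

Lemma enum_val_vtx_index t : enum_val (vtx_index t) = t.
Proof. by rewrite /vtx_index enum_rankK_in ?in_setT. Qed.

Definition row_fun m (M : 'M[C]_(m, N)) i (t : T) := M i (vtx_index t).

Lemma row_on_row_fun (w : 'rV[C]_N) : row_on [set: T] (row_fun w 0) = w.
Proof. by apply/rowP => l; rewrite mxE /row_fun vtx_indexK. Qed.

Lemma supported_setT (V : zmodType) (f : T -> V) : supported [set: T] f.
Proof. by move=> x; rewrite in_setT. Qed.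

Definition simple_above2 (d : 'rV[C]_N) :=
  forall i j, toC 2 < d 0 i -> toC 2 < d 0 j -> i = j.

Section Diagonalised.
Variables (P : 'M[C]_N) (d : 'rV[C]_N).
Hypotheses (Pu : P \is unitarymx)
  (AE : map_mx toC (adj R e [set: T]) = invmx P *m diag_mx d *m P).

Lemma simple_above2_of_vertex_deletion v :
  cyclotomic R e ([set: T] :\ v) -> simple_above2 d.
Proof.
move=> Gv i j di dj; apply/eqP/contraT => ij; pose k := vtx_index v.
have [x [y [xy0 xyk]]] :
    exists x y : C, (x != 0) || (y != 0) /\ x * P i k + y * P j k = 0.
  have [Pik0|Pik] := eqVneq (P i k) 0.
    by exists 1, 0; rewrite oner_eq0 Pik0 mulr0 mul0r addr0.
  by exists (P j k), (- P i k); rewrite oppr_eq0 Pik orbT mulrC mulNr subrr.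
pose c : 'rV[C]_N := x *: delta_mx 0 i + y *: delta_mx 0 j.
have cE l : c 0 l = x * (l == i)%:R + y * (l == j)%:R by rewrite !mxE.
have [ci cj] : c 0 i = x /\ c 0 j = y.
  by rewrite !cE !eqxx (negbTE ij) eq_sym (negbTE ij) !mulr1 !mulr0 addr0 add0r.
have c0 : c != 0.
  by apply: contraTneq xy0 => c0; rewrite -ci -cj c0 !mxE eqxx.
have c_top l : c 0 l != 0 -> toC 2 < d 0 l.
  rewrite cE; have [->//|li] := eqVneq l i; have [->//|lj] := eqVneq l j.
  by rewrite !mulr0 addr0 eqxx.
pose f := row_fun (c *m P) 0.
have fv : supported ([set: T] :\ v) f.
  move=> t; rewrite !inE andbT negbK => /eqP ->.
  by rewrite /f /row_fun mulmxDl -!scalemxAl -!rowE !mxE.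
have := cform_le (fun mu m => (andP (Gv mu m)).2) fv.
rewrite (cform_mx (supported_setT f)) (cdot_mx (supported_setT f)) row_on_row_fun.
have [-> ->] := unitary_coords_form c Pu AE.
by move/(lt_le_trans (diag_form_gt c0 c_top)); rewrite ltxx.
Qed.

Lemma eigvecC_row i a : d 0 i = toC a -> eigvecC (row_fun P i) a.
Proof.
move=> dia t; have PA : P *m map_mx toC (adj R e [set: T]) = diag_mx d *m P.
  by rewrite AE !mulmxA mulmxV ?unitarymx_unit ?mul1mx.
have := congr1 (fun M : 'M[C]_N => M i (vtx_index t)) PA.
rewrite /= mul_diag_mx !mxE dia => <-; rewrite (sum_supported (supported_setT _)).
apply: eq_bigr => l _; rewrite /row_fun vtx_indexK !mxE enum_val_vtx_index.
by rewrite rmorph_nat e_sym mulrC.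
Qed.

Lemma cdot_row i j : cdot (row_fun P i) (row_fun P j) = (i == j)%:R.
Proof.
have := congr1 (fun M : 'M[C]_N => M i j) (unitarymxP Pu); rewrite /= !mxE => <-.
rewrite /cdot (sum_supported (supported_setT _)).
by apply: eq_bigr => l _; rewrite /row_fun vtx_indexK !mxE.
Qed.

Lemma simple_above2_of_minimal_complements :
  (forall M, minimal_induced R e M -> cyclotomic R e (~: M)) -> simple_above2 d.
Proof.
move=> compl i j di dj; apply/eqP/contraT => ij.
have [a dia a2] := complex_gt_real di; have [b djb b2] := complex_gt_real dj.
have gi0 : cdot (row_fun P i) (row_fun P i) != 0 by rewrite cdot_row eqxx oner_eq0.
have [x [xa x0 gx]] := real_eigvec_of_eigvecC (eigvecC_row dia) (cdot_neq0 gi0).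
have hx L : exists t, row_fun P j t != L * toC (x t).
  apply/existsP; apply: contraT => /existsPn hL.
  have hE t : row_fun P j t = L * toC (x t) by apply/eqP/negPn/hL.
  have : cdot (row_fun P i) (row_fun P j) = L^* * \sum_t row_fun P i t * toC (x t).
    rewrite /cdot mulr_sumr; apply: eq_bigr => t _.
    by rewrite hE rmorphM /= conj_toC mulrCA.
  rewrite cdot_row (negbTE ij) => /esym/eqP.
  rewrite mulf_eq0 (negbTE gx) orbF conjC_eq0.
  move=> /eqP L0; have : cdot (row_fun P j) (row_fun P j) = 0.
    by rewrite /cdot big1 // => t _; rewrite hE L0 !mul0r.
  by rewrite cdot_row eqxx => /eqP; rewrite oner_eq0.
have [y [yb y0 xy]] := orthogonal_real_eigvec xa x0 (eigvecC_row djb) hx.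
by move: (eigvec_not_orthogonal compl xa yb a2 b2 x0 y0); rewrite xy eqxx.
Qed.

Lemma salem_of_simple_above2 : bipartite e -> ~ cyclotomic R e [set: T] ->
  simple_above2 d -> salem_graph R e.
Proof.
move=> eb Gnc top.
have mupE := mup_char_poly_diag (mulVmx (unitarymx_unit Pu)) AE.
have eig_top mu : eigenvalue_of R e [set: T] mu -> 2 < mu ->
    exists2 k, d 0 k = toC mu & [pred l | d 0 l == toC mu] =i pred1 k.
  rewrite eigenvalue_ofE /cpoly mupE => /card_gt0P [k]; rewrite inE => /eqP dk mu2.
  exists k => // l; rewrite !inE; apply/eqP/eqP => [dl|->//].
  by apply: top; rewrite ?dl ?dk ltcR.
have mup1 mu : eigenvalue_of R e [set: T] mu -> 2 < mu ->
    mup mu (cpoly R e [set: T]) = 1%N.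
  by move=> Gmu mu2; have [k _ /eq_card1] := eig_top mu Gmu mu2; rewrite /cpoly mupE.
have [lam Glam lam2] := bipartite_index_gt2 eb Gnc.
have top_lam mu : eigenvalue_of R e [set: T] mu -> 2 < mu -> mu = lam.
  move=> Gmu mu2; have [k dk _] := eig_top mu Gmu mu2.
  have [l dl _] := eig_top lam Glam lam2.
  by apply: complexI; rewrite -dk -dl (top k l) ?dk ?dl ?ltcR.
split => //; exists lam; split => //; split; first exact: mup1.
split => //; split; first by rewrite bipartite_mupN ?mup1.
move=> mu Gmu mu2; rewrite -[mu]opprK; congr (- _).
by apply: top_lam; rewrite ?bipartite_eigenvalueN // ltrNr.
Qed.

End Diagonalised.

End Graph.

Theorem theorem8 (R : realType) (T : finType) (e : rel T) :
  simple_graph e ->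
  ((bipartite e /\ ~ cyclotomic R e setT /\
      (exists v : T, cyclotomic R e (setT :\ v))) ->
     salem_graph R e) /\
  ((bipartite e /\ ~ cyclotomic R e setT /\
      (forall M : {set T}, minimal_induced R e M -> cyclotomic R e (~: M))) ->
     salem_graph R e).
Proof.
move=> [e_sym _].
have [P [d [Pu _ AE]]] := realsym_spectral (adj_sym R e_sym [set: T]).
split=> [[eb [Gnc [v Gv]]] | [eb [Gnc compl]]];
  apply: (salem_of_simple_above2 e_sym Pu AE eb Gnc).
- exact: (simple_above2_of_vertex_deletion e_sym Pu AE Gv).
- exact: (simple_above2_of_minimal_complements e_sym Pu AE compl).
Qed.
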